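(* Let $p$ be an imitation kernel $p(g\mid \mathbf w)=\sum_{k\in\mathcal A}\theta_kP_{(k)}(w_{-k},g)$ on a finite set $G$. If the $G$-stochastic function $k\mapsto P_{(k)}$ has more than one closed intercommunicating class, then $|\mathcal G(p)|>1$.
   Context: $G$ finite. A transition kernel is a map $p:G\times G^{-\mathbb N_+}\to[0,1]$ with $p(\cdot\mid \mathbf w)$ a probability on $G$ for every $\mathbf w=(w_{-1},w_{-2},\dots)$. An imitation kernel has the form $p(g\mid\mathbf w)=\sum_{k\in\mathcal A}\theta_kP_{(k)}(w_{-k},g)$, where $\mathcal A\subset\mathbb N_+$, $\theta=(\theta_k)_{k\in\mathcal A}$ is a probability distribution with $\theta_k>0$ for all $k\in\mathcal A$, and each $P_{(k)}$ is a stochastic matrix on $G$. A process $\mathbf X=(X_n)_{n\in\mathbb Z}$ (or its law on $G^{\mathbb Z}$) is compatible with $p$ if $P(X_n=g\mid X_{n-1},X_{n-2},\dots)=p(g\mid X_{n-1},X_{n-2},\dots)$ a.s. for all $n\in\mathbb Z$, $g\in G$; $\mathcal G(p)$ is the set of compatible laws. Words: $\mathcal A^*=\bigcup_{n\ge1}\mathcal A^n$, $P_{\mathbf a}=P_{(a_n)}\cdots P_{(a_1)}$ for $\mathbf a=(a_1,\dots,a_n)$. $i$ communicates with $j\ne i$ if $P_{\mathbf a}(i,j)>0$ for some word; intercommunication (each state with itself included) is an equivalence relation; a class $C$ is closed if $i\in C$ communicating with $j$ implies $j\in C$. *)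

From Stdlib Require Import Reals List ZArith.
Import ListNotations.
Open Scope R_scope.

Section Defs.
Variable G : Type.
Variable enumG : list G.

(* sum over the finite state set G (enumerated without repetition by enumG) *)
Definition sumG (f : G -> R) : R := fold_right (fun g acc => f g + acc) 0 enumG.

Fixpoint words (L : nat) : list (list G) :=
  match L with
  | O => [ [] ]
  | S L' => flat_map (fun g => map (fun w => g :: w) (words L')) enumG
  end.

Definition sumL (l : list (list G)) (f : list G -> R) : R :=
  fold_right (fun w acc => f w + acc) 0 l.

Definition stochastic (M : G -> G -> R) : Prop :=
  (forall i j, 0 <= M i j) /\ (forall i, sumG (M i) = 1).

Definition inA (theta : nat -> R) (k : nat) : Prop := 0 < theta k.

(* Weights form a probability distribution on A, a subset of N_+ *)
Definition imitation_weights (theta : nat -> R) : Prop :=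
  theta 0%nat = 0 /\ (forall k, 0 <= theta k) /\ infinite_sum theta 1.

(* P_a = P_(a_n) ... P_(a_1) for a = (a_1,...,a_n), n >= 1 *)
Fixpoint Pword (P : nat -> G -> G -> R) (a1 : nat) (rest : list nat) : G -> G -> R :=
  match rest with
  | [] => P a1
  | a2 :: rest' => fun i j => sumG (fun x => Pword P a2 rest' i x * P a1 x j)
  end.

Definition communicates (theta : nat -> R) (P : nat -> G -> G -> R) (i j : G) : Prop :=
  i <> j /\ exists a1 rest, inA theta a1 /\ Forall (inA theta) rest /\
              0 < Pword P a1 rest i j.

Definition intercomm theta P (i j : G) : Prop :=
  i = j \/ (communicates theta P i j /\ communicates theta P j i).

Definition closed_class theta P (i : G) : Prop :=
  forall j l, intercomm theta P i j -> communicates theta P j l -> intercomm theta P i l.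

(* A law on G^Z, described by its (consecutive-window) finite-dimensional
   distributions: fdd n w = P(X_n = w_0, X_(n+1) = w_1, ...). By Kolmogorov's
   extension theorem such consistent families are in bijection with
   probability laws on G^Z. *)
Definition law_fdd (mu : Z -> list G -> R) : Prop :=
  (forall n w, 0 <= mu n w) /\
  (forall n, mu n [] = 1) /\
  (forall n w, mu n w = sumG (fun g => mu n (w ++ [g]))) /\
  (forall n w, mu n w = sumG (fun g => mu (n - 1)%Z (g :: w))).

(* E[ P_k(X_(n-k), g) ; X_(n-m..n-1) = b ]  where b has length m *)
Definition cyl_term (P : nat -> G -> G -> R) (mu : Z -> list G -> R)
  (n : Z) (b : list G) (g : G) (k : nat) : R :=
  let m := length b in
  match b with
  | [] => sumG (fun h => P k h g * mu (n - Z.of_nat k)%Z [h])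
  | b0 :: _ =>
    if Nat.leb k m then P k (nth (m - k) b b0) g * mu (n - Z.of_nat m)%Z b
    else sumG (fun h => P k h g *
           sumL (words (k - m - 1)) (fun c => mu (n - Z.of_nat k)%Z (h :: c ++ b)))
  end.

(* Compatibility with p(g|w) = sum_k theta_k P_(k)(w_(-k), g), tested against
   all cylinder events of the past (which generate the past sigma-field):
   P(X_(n-m..n-1) = b, X_n = g) = E[ p(g | past) ; X_(n-m..n-1) = b ]. *)
Definition compatible (theta : nat -> R) (P : nat -> G -> G -> R)
  (mu : Z -> list G -> R) : Prop :=
  law_fdd mu /\
  forall (n : Z) (b : list G) (g : G),
    infinite_sum (fun k => theta k * cyl_term P mu n b g k)
                 (mu (n - Z.of_nat (length b))%Z (b ++ [g])).

End Defs.

From Stdlib Require Import Reals List ZArith Lia Lra.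
From Stdlib Require Import ClassicalEpsilon Classical Cantor.
Import ListNotations.
Open Scope R_scope.

(* Given a closed class containing [i0], run the chain from time [-a] with the
   whole past frozen at [i0], the weight of every lag reaching before the start
   being sent to [i0]. These finite-horizon laws are consistent, live on the
   class, and satisfy the compatibility equations up to the tail weight
   [1 - sum_(k <= M) theta k] of the lags longer than the elapsed time. A
   diagonal extraction over the countably many cylinders gives a limit as
   [a -> oo] which is exactly compatible and still lives on the class. Two
   disjoint closed classes thus give two compatible laws with different
   one-dimensional marginals. *)

(* [sumG enumG] and [sumL] are convertible to instances of [fsum]. *)
Definition fsum {A : Type} (l : list A) (f : A -> R) : R :=
  fold_right (fun a acc => f a + acc) 0 l.

Section FiniteSums.
Context {A : Type}.

Lemma fsum_ext (l : list A) f g :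
  (forall a, In a l -> f a = g a) -> fsum l f = fsum l g.
Proof.
  induction l as [|a l IH]; intros H; simpl; auto.
  f_equal; [|apply IH; intros]; apply H; simpl; auto.
Qed.

Lemma fsum_plus (l : list A) f g :
  fsum l (fun a => f a + g a) = fsum l f + fsum l g.
Proof. induction l; simpl; [|rewrite IHl]; lra. Qed.

Lemma fsum_minus (l : list A) f g :
  fsum l (fun a => f a - g a) = fsum l f - fsum l g.
Proof. induction l; simpl; [|rewrite IHl]; lra. Qed.

Lemma fsum_scal (l : list A) c f : fsum l (fun a => c * f a) = c * fsum l f.
Proof. induction l; simpl; [|rewrite IHl]; lra. Qed.

Lemma fsum_scalr (l : list A) c f : fsum l (fun a => f a * c) = fsum l f * c.
Proof. induction l; simpl; [|rewrite IHl]; lra. Qed.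

Lemma fsum_app (l1 l2 : list A) f : fsum (l1 ++ l2) f = fsum l1 f + fsum l2 f.
Proof. induction l1; simpl; [|rewrite IHl1]; lra. Qed.

Lemma fsum_zero (l : list A) : fsum l (fun _ => 0) = 0.
Proof. induction l; simpl; [|rewrite IHl]; lra. Qed.

Lemma fsum_nonneg (l : list A) f : (forall a, In a l -> 0 <= f a) -> 0 <= fsum l f.
Proof.
  induction l as [|a l IH]; simpl; intros H; [lra|].
  assert (0 <= f a) by auto. assert (0 <= fsum l f) by (apply IH; auto). lra.
Qed.

Lemma fsum_le (l : list A) f g :
  (forall a, In a l -> f a <= g a) -> fsum l f <= fsum l g.
Proof.
  intros H. assert (0 <= fsum l (fun a => g a - f a)).
  { apply fsum_nonneg. intros a Ha. specialize (H a Ha). lra. }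
  rewrite fsum_minus in *. lra.
Qed.

Lemma fsum_term_le (l : list A) f a :
  (forall b, In b l -> 0 <= f b) -> In a l -> f a <= fsum l f.
Proof.
  induction l as [|b l IH]; simpl; intros H Ha; [contradiction|].
  assert (0 <= f b) by auto. assert (0 <= fsum l f) by (apply fsum_nonneg; auto).
  destruct Ha as [<-|Ha]; [lra|]. assert (f a <= fsum l f) by auto. lra.
Qed.

Lemma fsum_sum_f_R0 (l : list A) (f : nat -> A -> R) M :
  sum_f_R0 (fun k => fsum l (f k)) M = fsum l (fun a => sum_f_R0 (fun k => f k a) M).
Proof. induction M; simpl; auto. now rewrite IHM, <- fsum_plus. Qed.

End FiniteSums.

Lemma fsum_swap {A B : Type} (l1 : list A) (l2 : list B) f :
  fsum l1 (fun a => fsum l2 (f a)) = fsum l2 (fun b => fsum l1 (fun a => f a b)).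
Proof.
  induction l1 as [|a l1 IH]; [symmetry; apply fsum_zero|].
  transitivity (fsum l2 (f a) + fsum l2 (fun b => fsum l1 (fun a' => f a' b)));
    [now rewrite <- IH | now rewrite <- fsum_plus].
Qed.

Lemma fsum_flat_map {A B : Type} (h : A -> list B) l f :
  fsum (flat_map h l) f = fsum l (fun a => fsum (h a) f).
Proof.
  induction l as [|a l IH]; simpl; auto. now rewrite fsum_app, IH.
Qed.

Lemma fsum_map {A B : Type} (h : A -> B) l f : fsum (map h l) f = fsum l (fun a => f (h a)).
Proof. induction l; simpl; [|rewrite IHl]; auto. Qed.

Lemma sum_f_R0_neq0 (f : nat -> R) N :
  sum_f_R0 f N <> 0 -> exists k, (k <= N)%nat /\ f k <> 0.
Proof.
  induction N as [|N IH]; simpl; intros H; [now exists 0%nat|].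
  destruct (Req_dec (f (S N)) 0) as [E|E]; [|now exists (S N)].
  destruct IH as [k [Hk Hf]]; [rewrite E in H; lra|]. exists k; split; auto.
Qed.

Lemma sum_f_R0_diff_bounds (f h : nat -> R) M d :
  (forall k, 0 <= f k <= h k) ->
  0 <= sum_f_R0 f (M + d) - sum_f_R0 f M <= sum_f_R0 h (M + d) - sum_f_R0 h M.
Proof.
  intros H. induction d as [|d IH]; [rewrite Nat.add_0_r; lra|].
  rewrite Nat.add_succ_r. simpl. specialize (H (S (M + d))). lra.
Qed.

Definition delta {A : Type} (a b : A) : R :=
  if excluded_middle_informative (a = b) then 1 else 0.

Lemma delta_sym {A : Type} (a b : A) : delta a b = delta b a.
Proof.
  unfold delta.
  destruct (excluded_middle_informative (a = b)), (excluded_middle_informative (b = a)); congruence.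
Qed.

Lemma delta_bounds {A : Type} (a b : A) : 0 <= delta a b <= 1.
Proof. unfold delta. destruct (excluded_middle_informative (a = b)); lra. Qed.

Lemma fsum_delta {A : Type} (l : list A) (a : A) f :
  NoDup l -> In a l -> fsum l (fun b => delta a b * f b) = f a.
Proof.
  induction l as [|b l IH]; intros Hnd Ha; [contradiction|].
  inversion Hnd as [|? ? Hb Hnd']; subst. simpl. unfold delta at 1.
  destruct (excluded_middle_informative (a = b)) as [<-|Hne].
  - rewrite (fsum_ext _ _ (fun _ => 0)), fsum_zero; [lra|].
    intros c Hc. unfold delta.
    destruct (excluded_middle_informative (a = c)) as [<-|]; [contradiction | ring].
  - destruct Ha as [->|Ha]; [congruence|]. rewrite IH; auto. lra.
Qed.

Lemma cv_const (c : R) : Un_cv (fun _ => c) c.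
Proof.
  intros e He; exists 0%nat; intros. unfold R_dist. rewrite Rminus_diag, Rabs_R0; lra.
Qed.

Lemma cv_scal (u : nat -> R) l c : Un_cv u l -> Un_cv (fun i => c * u i) (c * l).
Proof. intros H. apply CV_mult; auto using cv_const. Qed.

Lemma cv_fsum {A : Type} (l : list A) (u : nat -> A -> R) v :
  (forall a, In a l -> Un_cv (fun i => u i a) (v a)) ->
  Un_cv (fun i => fsum l (u i)) (fsum l v).
Proof.
  induction l as [|a l IH]; intros H; [apply (cv_const 0)|].
  apply CV_plus; [apply H; simpl; auto | apply IH; intros; apply H; simpl; auto].
Qed.

Lemma cv_sum_f_R0 (u : nat -> nat -> R) v M :
  (forall k, Un_cv (fun i => u i k) (v k)) ->
  Un_cv (fun i => sum_f_R0 (u i) M) (sum_f_R0 v M).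
Proof. intros H; induction M; simpl; auto. now apply CV_plus. Qed.

Lemma cv_ext_unique (u v : nat -> R) l1 l2 :
  Un_cv u l1 -> Un_cv v l2 -> (forall i, u i = v i) -> l1 = l2.
Proof.
  intros Hu Hv E. apply (UL_sequence u); auto.
  intros e He. destruct (Hv e He) as [N HN]. exists N. intros n Hn. rewrite E. auto.
Qed.

Lemma cv_le_eventually (u : nat -> R) l c N :
  Un_cv u l -> (forall i, (N <= i)%nat -> u i <= c) -> l <= c.
Proof.
  intros H Hb. apply Rnot_lt_le. intros Hlt.
  destruct (H (l - c)) as [N' HN']; [lra|].
  specialize (HN' (max N N') (Nat.le_max_r _ _)). specialize (Hb (max N N') (Nat.le_max_l _ _)).
  unfold R_dist in HN'. apply Rabs_def2 in HN'. lra.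
Qed.

Lemma cv_ge_eventually (u : nat -> R) l c N :
  Un_cv u l -> (forall i, (N <= i)%nat -> c <= u i) -> c <= l.
Proof.
  intros H Hb. apply Ropp_le_cancel.
  apply (cv_le_eventually (fun i => - u i) _ _ N); [now apply CV_opp|].
  intros i Hi. specialize (Hb i Hi). lra.
Qed.

Lemma cv_tail_subseq (u v : nat -> R) l N :
  Un_cv u l -> (forall i, (N <= i)%nat -> exists m, (i <= m)%nat /\ v i = u m) -> Un_cv v l.
Proof.
  intros Hu Hv e He. destruct (Hu e He) as [N' HN']. exists (max N N'). intros i Hi.
  destruct (Hv i) as [m [Hm ->]]; [lia|]. apply HN'. lia.
Qed.

(** * Diagonal extraction *)

Definition increasing (f : nat -> nat) : Prop := forall i, (f i < f (S i))%nat.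

Lemma increasing_ge_id f : increasing f -> forall i, (i <= f i)%nat.
Proof. intros Hf i; induction i; [lia|]. specialize (Hf i); lia. Qed.

Lemma bounded_cv_subseq (a b : R) (y : nat -> R) :
  (forall i, a <= y i <= b) ->
  exists psi, increasing psi /\ exists l, Un_cv (fun i => y (psi i)) l.
Proof.
  intros Hy.
  destruct (Bolzano_Weierstrass y _ (compact_P3 a b) Hy) as [l Hl].
  assert (Hclose : forall Ni : nat * nat, exists p,
             (fst Ni <= p)%nat /\ Rabs (y p - l) < / INR (S (snd Ni))).
  { intros [N i]. assert (Hpos : 0 < / INR (S i)) by (apply Rinv_0_lt_compat, lt_0_INR; lia).
    destruct (Hl (disc l (mkposreal _ Hpos)) N) as [p Hp]; [|now exists p].
    exists (mkposreal _ Hpos). intros z Hz; exact Hz. }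
  destruct (choice _ Hclose) as [pick Hpick].
  set (psi := fix psi i := match i with
                           | O => pick (0, 0)%nat
                           | S i' => pick (S (psi i'), i)
                           end).
  assert (Hpsi : forall i, Rabs (y (psi i) - l) < / INR (S i)) by (intros []; apply Hpick).
  exists psi; split.
  - intros i. apply (Hpick (S (psi i), S i)).
  - exists l. intros eps He. destruct (archimed_cor1 eps He) as [N [HN HN0]].
    exists N. intros i Hi. unfold R_dist. eapply Rlt_trans; [apply Hpsi|].
    eapply Rle_lt_trans; [|apply HN].
    apply Rinv_le_contravar; [apply lt_0_INR; lia | apply le_INR; lia].
Qed.

Section DiagonalExtraction.
Variables (I : Type) (code : nat -> I).
Hypothesis code_surj : forall c, exists j, code j = c.
Variable x : nat -> I -> R.
Hypothesis x_bounds : forall i c, 0 <= x i c <= 1.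
Variable extract : (nat -> R) -> nat -> nat.
Hypothesis extract_spec : forall y, (forall i, 0 <= y i <= 1) ->
  increasing (extract y) /\ exists l, Un_cv (fun i => y (extract y i)) l.

Fixpoint nested (j : nat) : nat -> nat :=
  match j with
  | O => fun a => a
  | S j' => fun a => nested j' (extract (fun i => x (nested j' i) (code j')) a)
  end.

Lemma nested_spec j :
  increasing (extract (fun i => x (nested j i) (code j))) /\
  exists l, Un_cv (fun i => x (nested (S j) i) (code j)) l.
Proof. exact (extract_spec _ (fun i => x_bounds _ _)). Qed.

Lemma nested_shift j e a : exists m, (a <= m)%nat /\ nested (e + j) a = nested j m.
Proof.
  induction e as [|e IH] in a |- *; [now exists a|].
  destruct (IH (extract (fun i => x (nested (e + j) i) (code (e + j))) a)) as [m [Hm E]].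
  exists m. split; [|exact E].
  generalize (increasing_ge_id _ (proj1 (nested_spec (e + j))) a). lia.
Qed.

Definition diagonal (i : nat) : nat := nested (S i) i.

Lemma diagonal_ge_id i : (i <= diagonal i)%nat.
Proof.
  destruct (nested_shift 0 (S i) i) as [m [Hm E]].
  unfold diagonal. rewrite Nat.add_0_r in E. now rewrite E.
Qed.

Lemma diagonal_cv c : exists l, Un_cv (fun i => x (diagonal i) c) l.
Proof.
  destruct (code_surj c) as [j <-]. destruct (proj2 (nested_spec j)) as [l Hl].
  exists l. apply (cv_tail_subseq _ _ _ j Hl). intros i Hi.
  destruct (nested_shift (S j) (i - j) i) as [m [Hm E]].
  exists m. split; auto. unfold diagonal.
  replace (S i) with (i - j + S j)%nat by lia. now rewrite E.
Qed.

End DiagonalExtraction.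

Lemma diagonal_extraction (I : Type) (code : nat -> I) (x : nat -> I -> R) :
  (forall c, exists j, code j = c) -> (forall i c, 0 <= x i c <= 1) ->
  exists d : nat -> nat, (forall i, (i <= d i)%nat) /\
    exists V : I -> R, forall c, Un_cv (fun i => x (d i) c) (V c).
Proof.
  intros code_surj x_bounds.
  destruct (choice (fun y psi => (forall i, 0 <= y i <= 1) ->
              increasing psi /\ exists l, Un_cv (fun i => y (psi i)) l)) as [extract Hextract].
  { intros y. destruct (classic (forall i, 0 <= y i <= 1)) as [Hy|Hy].
    - destruct (bounded_cv_subseq 0 1 y Hy) as [psi Hpsi]. now exists psi.
    - now exists (fun i => i). }
  exists (diagonal I code x extract). split; [intros i; now apply diagonal_ge_id|].
  apply (choice (fun c l => Un_cv (fun i => x (diagonal I code x extract i) c) l)).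
  intros c. now apply diagonal_cv.
Qed.

(** * Closed classes *)

Lemma closed_class_step (G : Type) (enumG : list G) theta P (i x : G) k g :
  closed_class G enumG theta P i -> intercomm G enumG theta P i x ->
  0 < theta k -> 0 < P k x g -> intercomm G enumG theta P i g.
Proof.
  intros Hc Hx Hk Hp. destruct (classic (x = g)) as [<-|Hne]; auto.
  apply (Hc x g Hx). split; auto. now exists k, [].
Qed.

Lemma closed_classes_disjoint (G : Type) (enumG : list G) theta P (i1 i2 x : G) :
  ~ intercomm G enumG theta P i1 i2 -> closed_class G enumG theta P i1 ->
  intercomm G enumG theta P i1 x -> intercomm G enumG theta P i2 x -> False.
Proof. intros Hn Hc1 H1 [<-|[_ H2]]; apply Hn; [exact H1 | exact (Hc1 x i2 H1 H2)]. Qed.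

(** * The chain started from a frozen past *)

Section Process.
Variables (G : Type) (enumG : list G).
Hypothesis enumG_nodup : NoDup enumG.
Hypothesis enumG_full : forall x : G, In x enumG.
Variables (theta : nat -> R) (P : nat -> G -> G -> R).
Hypothesis theta0 : theta 0%nat = 0.
Hypothesis theta_nonneg : forall k, 0 <= theta k.
Hypothesis theta_sum : infinite_sum theta 1.
Hypothesis P_stochastic : forall k, inA theta k -> stochastic G enumG (P k).

Notation wds := (words G enumG).

Lemma fsum_enum_delta a f : fsum enumG (fun b => delta a b * f b) = f a.
Proof. now apply fsum_delta. Qed.

Lemma fsum_enum_delta_swap {A : Type} (l : list A) (s : A -> G) (f : G -> R) (z : A -> R) :
  fsum enumG (fun h => f h * fsum l (fun y => delta (s y) h * z y)) =
  fsum l (fun y => z y * f (s y)).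
Proof.
  rewrite (fsum_ext _ _ (fun h => fsum l (fun y => delta (s y) h * (z y * f h))))
    by (intros h _; rewrite <- fsum_scal; apply fsum_ext; intros; ring).
  rewrite fsum_swap. apply fsum_ext; intros y _. apply fsum_enum_delta.
Qed.

Lemma words_length L y : In y (wds L) -> length y = L.
Proof.
  induction L as [|L IH] in y |- *; simpl; intros H.
  - now destruct H as [<-|[]].
  - apply in_flat_map in H as [g [_ H]]. apply in_map_iff in H as [y' [<- H]].
    simpl. now rewrite IH.
Qed.

Lemma words_In y : In y (wds (length y)).
Proof. induction y; simpl; auto. apply in_flat_map. exists a; split; auto using in_map. Qed.

Lemma fsum_words_S L f :
  fsum (wds (S L)) f = fsum enumG (fun g => fsum (wds L) (fun y => f (g :: y))).
Proof. simpl words. rewrite fsum_flat_map. apply fsum_ext; intros; apply fsum_map. Qed.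

Lemma fsum_words_snoc L f :
  fsum (wds (S L)) f = fsum enumG (fun g => fsum (wds L) (fun y => f (y ++ [g]))).
Proof.
  induction L as [|L IH] in f |- *; rewrite fsum_words_S; [reflexivity|].
  rewrite (fsum_ext _ _ (fun g =>
             fsum enumG (fun g' => fsum (wds L) (fun y => f (g :: y ++ [g'])))))
    by (intros g _; apply IH).
  rewrite fsum_swap. apply fsum_ext. intros g' _. now rewrite fsum_words_S.
Qed.

Definition tail (M : nat) : R := 1 - sum_f_R0 theta M.

Lemma tail_nonneg M : 0 <= tail M.
Proof.
  unfold tail. enough (sum_f_R0 theta M <= 1) by lra.
  apply (growing_ineq (sum_f_R0 theta)); [|exact theta_sum].
  intros n; simpl. specialize (theta_nonneg (S n)); lra.
Qed.

Lemma P_bounds k x g : 0 < theta k -> 0 <= P k x g <= 1.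
Proof.
  intros Hk. destruct (P_stochastic k Hk) as [Hnn Hsum]. split; auto.
  rewrite <- (Hsum x). apply fsum_term_le; auto.
Qed.

Lemma weighted_P_bounds k x g : 0 <= theta k * P k x g <= theta k.
Proof.
  destruct (theta_nonneg k) as [Hk|Hk]; [|rewrite <- Hk; lra].
  generalize (P_bounds k x g Hk). nra.
Qed.

Lemma fsum_weighted_P k x : fsum enumG (fun g => theta k * P k x g) = theta k.
Proof.
  rewrite fsum_scal. destruct (theta_nonneg k) as [Hk|Hk]; [|rewrite <- Hk; lra].
  destruct (P_stochastic k Hk) as [_ ->]. lra.
Qed.

Variable i0 : G.

(* A path [y] lists the states at times [0, 1, ..., length y - 1]; every other
   time, in particular every negative one, holds the boundary state [i0]. *)
Definition state_at (y : list G) (t : Z) : G :=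
  if (t <? 0)%Z then i0 else nth (Z.to_nat t) y i0.

Fixpoint window_ind (y : list G) (t : Z) (w : list G) : R :=
  match w with
  | [] => 1
  | a :: w' => delta (state_at y t) a * window_ind y (t + 1) w'
  end.

(* The lags [k] reaching before time [0] have their weight [tail] sent to [i0]
   itself rather than through [P k i0]; this keeps the process inside every
   closed set containing [i0]. *)
Definition step_prob (y : list G) (g : G) : R :=
  sum_f_R0 (fun k => theta k * P k (state_at y (Z.of_nat (length y) - Z.of_nat k)) g)
    (length y)
  + tail (length y) * delta i0 g.

Fixpoint rev_path_prob (ry : list G) : R :=
  match ry with
  | [] => 1
  | g :: ry' => rev_path_prob ry' * step_prob (rev ry') g
  end.

Definition path_prob (y : list G) : R := rev_path_prob (rev y).

Lemma path_prob_snoc y g : path_prob (y ++ [g]) = path_prob y * step_prob y g.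
Proof. unfold path_prob. rewrite rev_unit. simpl. now rewrite rev_involutive. Qed.

Lemma step_prob_nonneg y g : 0 <= step_prob y g.
Proof.
  apply Rplus_le_le_0_compat.
  - apply cond_pos_sum; intros; apply weighted_P_bounds.
  - apply Rmult_le_pos; [apply tail_nonneg|apply delta_bounds].
Qed.

Lemma fsum_step_prob y : fsum enumG (step_prob y) = 1.
Proof.
  unfold step_prob. rewrite fsum_plus, fsum_scal, <- fsum_sum_f_R0.
  rewrite (sum_eq _ theta) by (intros; apply fsum_weighted_P).
  rewrite (fsum_ext _ _ (fun g => delta i0 g * 1)) by (intros; ring).
  rewrite fsum_enum_delta. unfold tail; ring.
Qed.

Lemma path_prob_nonneg y : 0 <= path_prob y.
Proof.
  induction y using rev_ind; [unfold path_prob; simpl; lra|].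
  rewrite path_prob_snoc. apply Rmult_le_pos; auto using step_prob_nonneg.
Qed.

Lemma fsum_path_prob_snoc T h :
  (forall y g, length y = T -> h (y ++ [g]) = h y) ->
  fsum (wds (S T)) (fun y => path_prob y * h y) = fsum (wds T) (fun y => path_prob y * h y).
Proof.
  intros Hh. rewrite fsum_words_snoc, fsum_swap. apply fsum_ext; intros y Hy.
  rewrite (fsum_ext _ _ (fun g => path_prob y * h y * step_prob y g)).
  - now rewrite fsum_scal, fsum_step_prob, Rmult_1_r.
  - intros g _. rewrite path_prob_snoc, Hh by (now apply words_length). ring.
Qed.

Lemma fsum_path_prob T : fsum (wds T) path_prob = 1.
Proof.
  induction T as [|T IH]; [unfold path_prob; simpl; lra|].
  rewrite (fsum_ext _ _ (fun y => path_prob y * 1)) by (intros; ring).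
  rewrite fsum_path_prob_snoc by auto.
  rewrite (fsum_ext _ _ path_prob) by (intros; ring). exact IH.
Qed.

Lemma fsum_path_prob_bounds T (z : list G -> R) c :
  (forall y, In y (wds T) -> 0 <= z y <= c) ->
  0 <= fsum (wds T) (fun y => path_prob y * z y) <= c.
Proof.
  intros Hz. split.
  - apply fsum_nonneg; intros y Hy. specialize (Hz y Hy).
    generalize (path_prob_nonneg y). nra.
  - rewrite <- (Rmult_1_r c), <- (fsum_path_prob T), <- fsum_scal.
    apply fsum_le; intros y Hy. specialize (Hz y Hy).
    generalize (path_prob_nonneg y). nra.
Qed.

Lemma state_at_snoc y g t :
  (t < Z.of_nat (length y))%Z -> state_at (y ++ [g]) t = state_at y t.
Proof.
  intros H. unfold state_at. destruct (t <? 0)%Z eqn:E; auto.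
  apply Z.ltb_ge in E. rewrite app_nth1; auto. lia.
Qed.

Lemma state_at_last y g : state_at (y ++ [g]) (Z.of_nat (length y)) = g.
Proof.
  unfold state_at.
  replace (Z.of_nat (length y) <? 0)%Z with false by (symmetry; apply Z.ltb_ge; lia).
  now rewrite Nat2Z.id, nth_middle.
Qed.

Lemma window_ind_snoc y g w t :
  (t + Z.of_nat (length w) <= Z.of_nat (length y))%Z ->
  window_ind (y ++ [g]) t w = window_ind y t w.
Proof.
  induction w as [|a w IH] in t |- *; simpl; intros H; auto.
  rewrite state_at_snoc, IH by lia. reflexivity.
Qed.

Lemma window_ind_app y w1 w2 t :
  window_ind y t (w1 ++ w2) = window_ind y t w1 * window_ind y (t + Z.of_nat (length w1)) w2.
Proof.
  induction w1 as [|a w1 IH] in t |- *; simpl.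
  - rewrite Z.add_0_r; ring.
  - rewrite IH. replace (t + Z.pos (Pos.of_succ_nat (length w1)))%Z
      with (t + 1 + Z.of_nat (length w1))%Z by lia. ring.
Qed.

Lemma window_ind_bounds y w t : 0 <= window_ind y t w <= 1.
Proof.
  induction w as [|a w IH] in t |- *; simpl; [lra|].
  generalize (delta_bounds (state_at y t) a) (IH (t + 1)%Z). nra.
Qed.

Lemma fsum_window_ind_words y L t : fsum (wds L) (window_ind y t) = 1.
Proof.
  induction L as [|L IH] in t |- *; [simpl; lra|].
  rewrite fsum_words_S. simpl window_ind.
  rewrite (fsum_ext _ _ (fun g => delta (state_at y t) g * 1)).
  - apply fsum_enum_delta.
  - intros g _. now rewrite fsum_scal, IH.
Qed.

Lemma fsum_window_ind_words_app y L w t :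
  fsum (wds L) (fun c => window_ind y t (c ++ w)) = window_ind y (t + Z.of_nat L) w.
Proof.
  rewrite (fsum_ext _ _ (fun c => window_ind y t c * window_ind y (t + Z.of_nat L) w)).
  - now rewrite fsum_scalr, fsum_window_ind_words, Rmult_1_l.
  - intros c Hc. now rewrite window_ind_app, (words_length _ _ Hc).
Qed.

Lemma window_ind_nth y b t i d :
  (i < length b)%nat ->
  window_ind y t b = 0 \/ state_at y (t + Z.of_nat i) = nth i b d.
Proof.
  induction b as [|a b IH] in t, i |- *; simpl; intros Hi; [lia|].
  unfold delta at 1. destruct (excluded_middle_informative (state_at y t = a)) as [E|E].
  - destruct i as [|i]; [right; now rewrite Z.add_0_r|].
    destruct (IH (t + 1)%Z i) as [H|H]; [lia|left; rewrite H; ring|].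
    right. rewrite <- H. f_equal. lia.
  - left; ring.
Qed.

Definition window_prob (r : Z) (w : list G) : R :=
  fsum (wds (Z.to_nat (r + Z.of_nat (length w)))) (fun y => path_prob y * window_ind y r w).

Lemma window_prob_horizon r w T :
  (r + Z.of_nat (length w) <= Z.of_nat T)%Z ->
  fsum (wds T) (fun y => path_prob y * window_ind y r w) = window_prob r w.
Proof.
  intros H. unfold window_prob. set (T0 := Z.to_nat (r + Z.of_nat (length w))).
  assert (HT : (T0 <= T)%nat) by (unfold T0; lia).
  assert (H0 : (r + Z.of_nat (length w) <= Z.of_nat T0)%Z) by (unfold T0; lia).
  clearbody T0. induction HT as [|T HT IH]; [reflexivity|].
  rewrite fsum_path_prob_snoc; [apply IH; lia|].
  intros y g Hy. apply window_ind_snoc. lia.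
Qed.

Lemma window_prob_bounds r w : 0 <= window_prob r w <= 1.
Proof. apply fsum_path_prob_bounds. intros; apply window_ind_bounds. Qed.

Lemma window_prob_nil r : window_prob r [] = 1.
Proof.
  unfold window_prob. rewrite <- (fsum_path_prob (Z.to_nat (r + 0))).
  apply fsum_ext; intros; simpl; ring.
Qed.

Lemma window_prob_snoc r w : window_prob r w = fsum enumG (fun g => window_prob r (w ++ [g])).
Proof.
  set (T := Z.to_nat (r + Z.of_nat (length w) + 1)).
  rewrite <- (window_prob_horizon r w T) by lia.
  rewrite (fsum_ext _ _ (fun g => fsum (wds T) (fun y => path_prob y * window_ind y r (w ++ [g]))))
    by (intros g _; symmetry; apply window_prob_horizon; rewrite length_app; simpl; lia).
  rewrite fsum_swap. apply fsum_ext; intros y _.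
  rewrite (fsum_ext _ _ (fun g => delta (state_at y (r + Z.of_nat (length w))) g *
                                  (path_prob y * window_ind y r w)))
    by (intros g _; rewrite window_ind_app; simpl; ring).
  now rewrite fsum_enum_delta.
Qed.

Lemma window_prob_cons r w : window_prob r w = fsum enumG (fun g => window_prob (r - 1) (g :: w)).
Proof.
  set (T := Z.to_nat (r + Z.of_nat (length w))).
  rewrite <- (window_prob_horizon r w T) by lia.
  rewrite (fsum_ext _ _ (fun g =>
             fsum (wds T) (fun y => path_prob y * window_ind y (r - 1) (g :: w))))
    by (intros g _; symmetry; apply window_prob_horizon; simpl length; lia).
  rewrite fsum_swap. apply fsum_ext; intros y _.
  rewrite (fsum_ext _ _ (fun g => delta (state_at y (r - 1)) g * (path_prob y * window_ind y r w)))
    by (intros g _; simpl; rewrite Z.sub_add; ring).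
  now rewrite fsum_enum_delta.
Qed.

Lemma window_prob_extend T b g :
  (length b <= T)%nat ->
  window_prob (Z.of_nat T - Z.of_nat (length b)) (b ++ [g]) =
  fsum (wds T) (fun y => path_prob y * window_ind y (Z.of_nat T - Z.of_nat (length b)) b *
                         step_prob y g).
Proof.
  intros Hb. set (s := (Z.of_nat T - Z.of_nat (length b))%Z).
  rewrite <- (window_prob_horizon _ _ (S T)) by (rewrite length_app; simpl; lia).
  rewrite fsum_words_snoc, fsum_swap. apply fsum_ext; intros y Hy. apply words_length in Hy.
  rewrite (fsum_ext _ _ (fun g' => delta g g' * (path_prob y * window_ind y s b * step_prob y g'))).
  - apply fsum_enum_delta.
  - intros g' _. rewrite path_prob_snoc, window_ind_app, window_ind_snoc by lia.
    simpl window_ind. replace (s + Z.of_nat (length b))%Z with (Z.of_nat (length y)) by lia.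
    rewrite state_at_last, delta_sym. ring.
Qed.

(* [E[P k X_(T-k) g ; X_(T-|b|), ..., X_(T-1) = b]] for the chain started at time [0]. *)
Definition cyl_expect (T : nat) (b : list G) (g : G) (k : nat) : R :=
  fsum (wds T) (fun y => path_prob y * window_ind y (Z.of_nat T - Z.of_nat (length b)) b *
                         P k (state_at y (Z.of_nat T - Z.of_nat k)) g).

Lemma cyl_expect_nil T g k :
  (1 <= k <= T)%nat ->
  fsum enumG (fun h => P k h g * window_prob (Z.of_nat T - Z.of_nat k) [h]) = cyl_expect T [] g k.
Proof.
  intros Hk. unfold cyl_expect.
  rewrite (fsum_ext _ _ (fun h => P k h g * fsum (wds T) (fun y =>
             delta (state_at y (Z.of_nat T - Z.of_nat k)) h * path_prob y))).
  - rewrite fsum_enum_delta_swap. apply fsum_ext; intros; simpl; ring.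
  - intros h _. rewrite <- (window_prob_horizon _ _ T) by (simpl; lia).
    f_equal. apply fsum_ext; intros; simpl; ring.
Qed.

Lemma cyl_expect_near T b d g k :
  (1 <= k <= length b)%nat -> (length b <= T)%nat ->
  P k (nth (length b - k) b d) g * window_prob (Z.of_nat T - Z.of_nat (length b)) b =
  cyl_expect T b g k.
Proof.
  intros Hk Hb. unfold cyl_expect.
  rewrite <- (window_prob_horizon _ _ T) by lia. rewrite <- fsum_scal.
  apply fsum_ext; intros y _.
  destruct (window_ind_nth y b (Z.of_nat T - Z.of_nat (length b)) (length b - k) d)
    as [E|E]; [lia| rewrite E; ring |].
  replace (Z.of_nat T - Z.of_nat (length b) + Z.of_nat (length b - k))%Z
    with (Z.of_nat T - Z.of_nat k)%Z in E by lia.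
  rewrite E. ring.
Qed.

Lemma fsum_window_prob_words_app t L b h T :
  (t + 1 + Z.of_nat L + Z.of_nat (length b) <= Z.of_nat T)%Z ->
  fsum (wds L) (fun c => window_prob t (h :: c ++ b)) =
  fsum (wds T) (fun y => path_prob y * (delta (state_at y t) h *
                                        window_ind y (t + 1 + Z.of_nat L) b)).
Proof.
  intros H.
  rewrite (fsum_ext _ _ (fun c =>
             fsum (wds T) (fun y => path_prob y * window_ind y t (h :: c ++ b)))).
  - rewrite fsum_swap. apply fsum_ext; intros y _. simpl window_ind.
    rewrite (fsum_ext _ _ (fun c =>
               path_prob y * delta (state_at y t) h * window_ind y (t + 1) (c ++ b)))
      by (intros; ring).
    rewrite fsum_scal, fsum_window_ind_words_app. ring.
  - intros c Hc. symmetry. apply window_prob_horizon.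
    simpl length. rewrite length_app, (words_length _ _ Hc). lia.
Qed.

Lemma cyl_expect_far T b g k :
  (length b < k <= T)%nat ->
  fsum enumG (fun h => P k h g * fsum (wds (k - length b - 1))
                                   (fun c => window_prob (Z.of_nat T - Z.of_nat k) (h :: c ++ b))) =
  cyl_expect T b g k.
Proof.
  intros Hk. unfold cyl_expect.
  rewrite (fsum_ext _ _ (fun h => P k h g * fsum (wds T) (fun y =>
             delta (state_at y (Z.of_nat T - Z.of_nat k)) h *
             (path_prob y * window_ind y (Z.of_nat T - Z.of_nat (length b)) b)))).
  - rewrite fsum_enum_delta_swap. apply fsum_ext; intros; ring.
  - intros h _. rewrite (fsum_window_prob_words_app _ _ _ _ T) by lia. f_equal.
    apply fsum_ext; intros y _.
    replace (Z.of_nat T - Z.of_nat k + 1 + Z.of_nat (k - length b - 1))%Z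
      with (Z.of_nat T - Z.of_nat (length b))%Z by lia.
    ring.
Qed.

(* The law of the process started at time [-a]. *)
Definition law_from (a : Z) (t : Z) (w : list G) : R := window_prob (t + a) w.

Lemma law_from_fdd a : law_fdd G enumG (law_from a).
Proof.
  unfold law_from.
  split; [|split; [|split]]; intros n;
    [intros w; apply window_prob_bounds | apply window_prob_nil
    | intros w; apply window_prob_snoc | intros w].
  rewrite window_prob_cons. apply fsum_ext; intros.
  now replace (n - 1 + a)%Z with (n + a - 1)%Z by lia.
Qed.

Lemma cyl_term_law_from a n b g k T :
  (n + a = Z.of_nat T)%Z -> (length b <= T)%nat -> (1 <= k <= T)%nat ->
  cyl_term G enumG P (law_from a) n b g k = cyl_expect T b g k.
Proof.
  intros HT Hb Hk. unfold cyl_term, law_from. cbv zeta.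
  destruct b as [|b0 b'].
  - rewrite <- cyl_expect_nil by lia. apply fsum_ext; intros.
    now replace (n - Z.of_nat k + a)%Z with (Z.of_nat T - Z.of_nat k)%Z by lia.
  - destruct (Nat.leb k (length (b0 :: b'))) eqn:Ek.
    + apply Nat.leb_le in Ek. rewrite <- (cyl_expect_near _ _ b0) by lia.
      now replace (n - Z.of_nat (length (b0 :: b')) + a)%Z
        with (Z.of_nat T - Z.of_nat (length (b0 :: b')))%Z by lia.
    + apply Nat.leb_gt in Ek. rewrite <- cyl_expect_far by lia.
      apply fsum_ext; intros. f_equal. apply fsum_ext; intros.
      now replace (n - Z.of_nat k + a)%Z with (Z.of_nat T - Z.of_nat k)%Z by lia.
Qed.

Lemma step_prob_partial_bounds y g M :
  (M <= length y)%nat ->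
  0 <= step_prob y g -
       sum_f_R0 (fun k => theta k * P k (state_at y (Z.of_nat (length y) - Z.of_nat k)) g) M
  <= tail M.
Proof.
  intros HM. unfold step_prob.
  set (f := fun k => theta k * P k (state_at y (Z.of_nat (length y) - Z.of_nat k)) g).
  destruct (sum_f_R0_diff_bounds f theta M (length y - M)) as [H1 H2];
    [intros k; apply weighted_P_bounds|].
  replace (M + (length y - M))%nat with (length y) in H1, H2 by lia.
  generalize (delta_bounds i0 g) (tail_nonneg (length y)). unfold tail in *. nra.
Qed.

Lemma law_from_cyl_approx a n b g M :
  (Z.of_nat (length b) <= n + a)%Z -> (Z.of_nat M <= n + a)%Z ->
  0 <= law_from a (n - Z.of_nat (length b)) (b ++ [g]) -
       sum_f_R0 (fun k => theta k * cyl_term G enumG P (law_from a) n b g k) M <= tail M.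
Proof.
  intros Hb HM. set (T := Z.to_nat (n + a)).
  assert (HT : (n + a = Z.of_nat T)%Z) by lia.
  assert (Hext : law_from a (n - Z.of_nat (length b)) (b ++ [g]) =
    fsum (wds T) (fun y => path_prob y * window_ind y (Z.of_nat T - Z.of_nat (length b)) b *
                           step_prob y g)).
  { unfold law_from. rewrite <- window_prob_extend by lia. f_equal. lia. }
  rewrite Hext.
  set (s := (Z.of_nat T - Z.of_nat (length b))%Z).
  set (partial := fun y => sum_f_R0 (fun k =>
                    theta k * P k (state_at y (Z.of_nat T - Z.of_nat k)) g) M).
  (* Term by term, the partial sum is the expectation of the first [M] lags of [step_prob]. *)
  rewrite (sum_eq _ (fun k => fsum (wds T) (fun y => path_prob y * window_ind y s b *
                        (theta k * P k (state_at y (Z.of_nat T - Z.of_nat k)) g)))).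
  - rewrite fsum_sum_f_R0, <- fsum_minus.
    rewrite (fsum_ext _ _ (fun y =>
               path_prob y * (window_ind y s b * (step_prob y g - partial y)))).
    + apply fsum_path_prob_bounds. intros y Hy. apply words_length in Hy.
      generalize (window_ind_bounds y b s) (step_prob_partial_bounds y g M).
      unfold partial. rewrite Hy. intros Hind Hd. specialize (Hd ltac:(lia)). nra.
    + intros y _. unfold partial.
      rewrite (sum_eq _ (fun k => theta k * P k (state_at y (Z.of_nat T - Z.of_nat k)) g *
                                  (path_prob y * window_ind y s b))) by (intros; ring).
      rewrite <- scal_sum. ring.
  - intros [|k] Hk.
    + rewrite theta0, (fsum_ext _ _ (fun _ => 0)), fsum_zero by (intros; ring). ring.
    + rewrite cyl_term_law_from with (T := T) by lia. unfold cyl_expect. fold s.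
      rewrite <- fsum_scal. apply fsum_ext; intros; ring.
Qed.

Section Support.
Variable C : G -> Prop.
Hypothesis C_i0 : C i0.
Hypothesis C_closed : forall x k g, C x -> 0 < theta k -> 0 < P k x g -> C g.

Lemma state_at_support y t : (forall z, In z y -> C z) -> C (state_at y t).
Proof.
  intros Hy. unfold state_at. destruct (t <? 0)%Z; auto.
  destruct (nth_in_or_default (Z.to_nat t) y i0) as [Hi| ->]; auto.
Qed.

Lemma step_prob_support y g : (forall z, In z y -> C z) -> step_prob y g <> 0 -> C g.
Proof.
  intros Hy Hq. unfold step_prob in Hq.
  destruct (Req_dec (tail (length y) * delta i0 g) 0) as [E|E].
  - rewrite E, Rplus_0_r in Hq. apply sum_f_R0_neq0 in Hq as [k [_ Hk]].
    set (x := state_at y (Z.of_nat (length y) - Z.of_nat k)) in Hk.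
    destruct (theta_nonneg k) as [Ht|Ht]; [|rewrite <- Ht in Hk; lra].
    destruct (P_bounds k x g Ht) as [[Hp|Hp] _]; [|rewrite <- Hp in Hk; lra].
    apply (C_closed x k); auto. now apply state_at_support.
  - unfold delta in E. destruct (excluded_middle_informative (i0 = g)) as [<-|]; auto. lra.
Qed.

Lemma path_prob_support y : path_prob y <> 0 -> forall z, In z y -> C z.
Proof.
  induction y as [|g y IH] using rev_ind; intros H z Hz; [destruct Hz|].
  rewrite path_prob_snoc in H.
  assert (Hy : path_prob y <> 0) by (intro E; apply H; rewrite E; ring).
  apply in_app_or in Hz as [Hz|[<-|[]]]; [now apply IH|].
  apply (step_prob_support y); [now apply IH | intro E; apply H; rewrite E; ring].
Qed.

Lemma window_prob_support r x : ~ C x -> window_prob r [x] = 0.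
Proof.
  intros Hx. unfold window_prob. rewrite (fsum_ext _ _ (fun _ => 0)); [apply fsum_zero|].
  intros y _. destruct (Req_dec (path_prob y) 0) as [E|E]; [rewrite E; ring|].
  simpl window_ind. unfold delta.
  destruct (excluded_middle_informative (state_at y r = x)) as [<-|]; [|ring].
  exfalso. apply Hx, state_at_support. now apply path_prob_support.
Qed.

End Support.

(** * Limits of compatible laws *)

Lemma cyl_term_cv (mu : nat -> Z -> list G -> R) V n b g k :
  (forall t w, Un_cv (fun i => mu i t w) (V t w)) ->
  Un_cv (fun i => cyl_term G enumG P (mu i) n b g k) (cyl_term G enumG P V n b g k).
Proof.
  intros Hcv. unfold cyl_term. cbv zeta. destruct b as [|b0 b'].
  - apply (cv_fsum enumG (fun i h => P k h g * mu i (n - Z.of_nat k)%Z [h])).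
    intros; apply cv_scal, Hcv.
  - destruct (Nat.leb k (length (b0 :: b'))); [apply cv_scal, Hcv|].
    apply (cv_fsum enumG (fun i h => P k h g * fsum (wds (k - length (b0 :: b') - 1))
             (fun c => mu i (n - Z.of_nat k)%Z (h :: c ++ b0 :: b')))).
    intros h _; apply cv_scal.
    apply (cv_fsum _ (fun i c => mu i (n - Z.of_nat k)%Z (h :: c ++ b0 :: b'))). auto.
Qed.

Lemma law_fdd_cv (mu : nat -> Z -> list G -> R) V :
  (forall i, law_fdd G enumG (mu i)) ->
  (forall t w, Un_cv (fun i => mu i t w) (V t w)) -> law_fdd G enumG V.
Proof.
  intros Hmu Hcv. split; [|split; [|split]]; intros n.
  - intros w. apply (cv_ge_eventually _ _ 0 0 (Hcv n w)). intros i _. apply (Hmu i).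
  - apply (cv_ext_unique (fun i => mu i n []) (fun _ => 1)); auto using cv_const.
    intros i; apply (Hmu i).
  - intros w. apply (cv_ext_unique (fun i => mu i n w)
                       (fun i => fsum enumG (fun g => mu i n (w ++ [g])))); auto.
    + apply (cv_fsum enumG (fun i g => mu i n (w ++ [g]))); auto.
    + intros i; apply (Hmu i).
  - intros w. apply (cv_ext_unique (fun i => mu i n w)
                       (fun i => fsum enumG (fun g => mu i (n - 1)%Z (g :: w)))); auto.
    + apply (cv_fsum enumG (fun i g => mu i (n - 1)%Z (g :: w))); auto.
    + intros i; apply (Hmu i).
Qed.

Lemma compatible_cv (mu : nat -> Z -> list G -> R) V :
  (forall t w, Un_cv (fun i => mu i t w) (V t w)) -> law_fdd G enumG V ->
  (forall n b g M, exists N, forall i, (N <= i)%nat ->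
     0 <= mu i (n - Z.of_nat (length b))%Z (b ++ [g]) -
          sum_f_R0 (fun k => theta k * cyl_term G enumG P (mu i) n b g k) M <= tail M) ->
  compatible G enumG theta P V.
Proof.
  intros Hcv HV Happrox. split; auto. intros n b g eps He.
  destruct (theta_sum eps He) as [N HN]. exists N. intros M HM. specialize (HN M HM).
  destruct (Happrox n b g M) as [N0 HN0].
  assert (Hlim : Un_cv (fun i => mu i (n - Z.of_nat (length b))%Z (b ++ [g]) -
                          sum_f_R0 (fun k => theta k * cyl_term G enumG P (mu i) n b g k) M)
                       (V (n - Z.of_nat (length b))%Z (b ++ [g]) -
                          sum_f_R0 (fun k => theta k * cyl_term G enumG P V n b g k) M)).
  { apply CV_minus; [apply Hcv|].
    apply (cv_sum_f_R0 (fun i k => theta k * cyl_term G enumG P (mu i) n b g k)).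
    intros k. apply cv_scal, cyl_term_cv, Hcv. }
  assert (H1 := cv_ge_eventually _ _ _ N0 Hlim (fun i Hi => proj1 (HN0 i Hi))).
  assert (H2 := cv_le_eventually _ _ _ N0 Hlim (fun i Hi => proj2 (HN0 i Hi))).
  unfold R_dist, tail in *. apply Rabs_def2 in HN.
  rewrite Rabs_minus_sym, Rabs_pos_eq; lra.
Qed.

Definition window_code (j : nat) : Z * list G :=
  let (a, r) := Cantor.of_nat j in
  let (b, r') := Cantor.of_nat r in
  let (L, idx) := Cantor.of_nat r' in
  ((Z.of_nat a - Z.of_nat b)%Z, nth idx (wds L) []).

Lemma window_code_surj c : exists j, window_code j = c.
Proof.
  destruct c as [n w].
  destruct (In_nth _ _ [] (words_In w)) as [idx [_ Hidx]].
  exists (Cantor.to_nat (Z.to_nat n,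
            Cantor.to_nat (Z.to_nat (- n), Cantor.to_nat (length w, idx)))).
  unfold window_code. rewrite !Cantor.cancel_of_to, Hidx. f_equal. lia.
Qed.

Lemma exists_compatible_supported (C : G -> Prop) :
  C i0 -> (forall x k g, C x -> 0 < theta k -> 0 < P k x g -> C g) ->
  exists V, compatible G enumG theta P V /\ forall x, ~ C x -> V 0%Z [x] = 0.
Proof.
  intros C_i0 C_closed.
  destruct (diagonal_extraction _ window_code
              (fun i c => law_from (Z.of_nat i) (fst c) (snd c)) window_code_surj)
    as [d [Hd [V0 HV0]]]; [intros; apply window_prob_bounds|].
  set (V := fun t w => V0 (t, w)).
  assert (Hcv : forall t w, Un_cv (fun i => law_from (Z.of_nat (d i)) t w) (V t w))
    by (intros t w; apply (HV0 (t, w))).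
  assert (HV : law_fdd G enumG V) by exact (law_fdd_cv _ _ (fun i => law_from_fdd _) Hcv).
  exists V. split.
  - apply (compatible_cv _ _ Hcv HV). intros n b g M.
    exists (Z.to_nat (Z.of_nat (length b) + Z.of_nat M - n)). intros i Hi.
    generalize (Hd i). intros. apply law_from_cyl_approx; lia.
  - intros x Hx. apply (cv_ext_unique (fun i => law_from (Z.of_nat (d i)) 0 [x]) (fun _ => 0));
      auto using cv_const.
    intros i. now apply (window_prob_support C).
Qed.

Lemma exists_compatible_on_class :
  closed_class G enumG theta P i0 ->
  exists V, compatible G enumG theta P V /\
            forall x, ~ intercomm G enumG theta P i0 x -> V 0%Z [x] = 0.
Proof.
  intros Hc. apply exists_compatible_supported; [now left|].
  intros x k g Hx Hk Hp. now apply (closed_class_step _ _ _ _ _ x k).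
Qed.

End Process.

Lemma law_fdd_first_marginal (G : Type) (enumG : list G) V :
  law_fdd G enumG V -> fsum enumG (fun x => V 0%Z [x]) = 1.
Proof. intros [_ [Hnil [Hsnoc _]]]. rewrite <- (Hnil 0%Z). symmetry. exact (Hsnoc 0%Z []). Qed.

Theorem mainTheorem2
  (G : Type) (enumG : list G)
  (HnodupG : NoDup enumG) (HfullG : forall x : G, In x enumG)
  (theta : nat -> R) (P : nat -> G -> G -> R)
  (Htheta : imitation_weights theta)
  (HP : forall k, inA theta k -> @stochastic G enumG (P k))
  (Hclasses : exists i1 i2 : G,
      ~ @intercomm G enumG theta P i1 i2 /\
      @closed_class G enumG theta P i1 /\ @closed_class G enumG theta P i2) :
  exists mu1 mu2 : Z -> list G -> R,
    @compatible G enumG theta P mu1 /\ @compatible G enumG theta P mu2 /\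
    exists (n : Z) (w : list G), mu1 n w <> mu2 n w.
Proof.
  destruct Htheta as [theta0 [theta_nonneg theta_sum]].
  destruct Hclasses as [i1 [i2 [Hn [Hc1 Hc2]]]].
  destruct (exists_compatible_on_class G enumG HnodupG HfullG theta P theta0 theta_nonneg
              theta_sum HP i1 Hc1) as [V1 [HV1 HS1]].
  destruct (exists_compatible_on_class G enumG HnodupG HfullG theta P theta0 theta_nonneg
              theta_sum HP i2 Hc2) as [V2 [HV2 HS2]].
  exists V1, V2. split; [exact HV1|split; [exact HV2|]].
  exists 0%Z. apply not_all_not_ex. intros Hsame.
  assert (Hzero : forall x, V1 0%Z [x] = 0).
  { intros x. destruct (classic (intercomm G enumG theta P i1 x)) as [H1|H1]; [|now apply HS1].
    rewrite (NNPP _ (Hsame [x])). apply HS2. intros H2.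
    exact (closed_classes_disjoint _ _ _ _ _ _ x Hn Hc1 H1 H2). }
  destruct HV1 as [HV1 _]. apply law_fdd_first_marginal in HV1.
  rewrite (fsum_ext _ _ (fun _ => 0)), fsum_zero in HV1 by auto. lra.
Qed.
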